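(* Let $\succ=(\succ_s)_{s\in S}$ be a priority profile in which every $\succ_s$ is a partial order on $I$. Then $$f^{\succ}=\bigcup_{\succ'\in\mathcal{E}(\succ)}\{EA(\succ,\succ')\}.$$
   Context: A partial order on $I$ is an asymmetric and transitive relation; a total order is a partial order that is also negatively transitive and complete. School choice setup: $I$ finite set of students ($|I|\ge 3$), $S$ finite set of schools; each student $i$ has a total order $P_i$ on $S\cup\{\emptyset\}$ ($sR_is'$ means $sP_is'$ or $s=s'$); each school $s$ has capacity $q_s\in\mathbb{Z}_{++}$ and an asymmetric priority relation $\succ_s$ on $I$. A matching $\mu$ assigns each $i$ to $\mu(i)\in S\cup\{\emptyset\}$ with $|\mu(s)|\le q_s$, $\mu(s)=\{i:\mu(i)=s\}$. $\mu$ is stable for $\succ$ if individually rational ($\mu(i)R_i\emptyset$), non-wasteful ($sP_i\mu(i)$ implies $|\mu(s)|=q_s$) and fair (no $s$, $j\in\mu(s)$, $i\notin\mu(s)$ with $sR_i\mu(i)$ and $(i,j)\in\succ_s$). Pareto dominance: $\mu'(i)R_i\mu(i)$ for all $i$, strict for some $i$. An SOSM for $\succ$ is a stable matching not Pareto dominated by any stable matching; $f^\succ$ is the set of SOSMs. An extension of $\succ_s$ is a total order on $I$ containing $\succ_s$; $\mathcal{E}(\succ)$ is the set of profiles of extensions. For a profile of total orders the SOSM is unique (it is the student-proposing deferred acceptance outcome). EADAM (Tang–Yu version): given $\succ$ and $\succ'\in\mathcal{E}(\succ)$, Round 0: compute the SOSM for $\succ'$. Round $k\ge1$: (1) with respect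 to the current problem and the matching of Round $k-1$, call a remaining school $s$ underdemanded if no remaining student $i$ has $sP_i\mu(i)$; fix the assignments at underdemanded schools, and remove these schools, the students matched to them, and the remaining students who are unmatched (matched to $\emptyset$); (2) for each removed student $i$ and each remaining school $s$ with $sP_i(\text{assignment of }i)$, and each remaining student $j$ with $(i,j)\in\succ_s$, delete $s$ from $j$'s preference list; (3) compute the SOSM for the subproblem consisting of the remaining schools and students, with the (possibly modified) preferences and the priorities $\succ'$ restricted to remaining students. The algorithm stops when all schools are removed; $EA(\succ,\succ')$ denotes the matching given by all fixed assignments. *)

From mathcomp Require Import all_boot.
Set Implicit Arguments. Unset Strict Implicit. Unset Printing Implicit Defensive.

Section Orders.
Variable T : Type.
Definition asymmetric (r : rel T) := forall x y, r x y -> ~~ r y x.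
Definition negatively_transitive (r : rel T) :=
  forall x y z, ~~ r x y -> ~~ r y z -> ~~ r x z.
Definition complete_rel (r : rel T) := forall x y, x <> y -> r x y \/ r y x.
Definition partial_order (r : rel T) := asymmetric r /\ transitive r.
Definition total_order (r : rel T) :=
  partial_order r /\ negatively_transitive r /\ complete_rel r.
End Orders.

Section SchoolChoice.
Variables (I S : finType).

(* A (sub)problem: remaining students R, remaining schools T, student
   preferences P (strict, on S + {emptyset} = option S), capacities q,
   priorities pri. A matching is mu : I -> option S (None = emptyset);
   only its values on R matter. *)
Variables (R : {set I}) (T : {set S}) (P : I -> rel (option S))
          (q : S -> nat) (pri : S -> rel I).

Definition wpref (i : I) (x y : option S) := P i x y || (x == y).

Definition assigned (mu : I -> option S) (s : S) : {set I} :=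
  [set i in R | mu i == Some s].

Definition is_matching (mu : I -> option S) :=
  (forall i, i \in R -> forall s, mu i = Some s -> s \in T) /\
  (forall s, s \in T -> #|assigned mu s| <= q s).

Definition individually_rational (mu : I -> option S) :=
  forall i, i \in R -> wpref i (mu i) None.

Definition non_wasteful (mu : I -> option S) :=
  forall i s, i \in R -> s \in T -> P i (Some s) (mu i) -> #|assigned mu s| = q s.

Definition fair (mu : I -> option S) :=
  ~ exists s i j, s \in T /\ i \in R /\ j \in assigned mu s /\
                  i \notin assigned mu s /\
                  wpref i (Some s) (mu i) /\ pri s i j.

Definition stable (mu : I -> option S) :=
  [/\ is_matching mu, individually_rational mu, non_wasteful mu & fair mu].

Definition pareto_dominates (mu' mu : I -> option S) :=
  (forall i, i \in R -> wpref i (mu' i) (mu i)) /\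
  (exists i, i \in R /\ P i (mu' i) (mu i)).

Definition sosm (mu : I -> option S) :=
  stable mu /\ ~ exists mu', stable mu' /\ pareto_dominates mu' mu.

End SchoolChoice.

Definition f_sosm (I S : finType) (P : I -> rel (option S)) (q : S -> nat)
  (pri : S -> rel I) (mu : I -> option S) : Prop :=
  sosm [set: I] [set: S] P q pri mu.

Definition extension (I S : finType) (pri pri' : S -> rel I) :=
  forall s, total_order (pri' s) /\ (forall i j, pri s i j -> pri' s i j).

Section EADAM.
Variables (I S : finType) (P : I -> rel (option S)) (q : S -> nat)
          (pri pri' : S -> rel I).

(* Preferences after deleting the schools in del j from student j's list:
   deleted schools become unacceptable (ranked below emptyset). *)
Definition is_deleted (del : I -> {set S}) (j : I) (x : option S) : bool :=
  if x is Some s then s \in del j else false.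
Definition modpref (del : I -> {set S}) (j : I) (x y : option S) : bool :=
  (~~ is_deleted del j x && is_deleted del j y) ||
  ((is_deleted del j x == is_deleted del j y) && P j x y).

Definition underdemanded (R : {set I}) (T : {set S}) (del : I -> {set S})
  (mu : I -> option S) : {set S} :=
  [set s in T | [forall i in R, ~~ modpref del i (Some s) (mu i)]].

Definition removed_students (R : {set I}) (U : {set S}) (mu : I -> option S)
  : {set I} :=
  [set i in R | if mu i is Some s then s \in U else true].

(* step (2): for each removed i, remaining s with s P_i mu(i), and remaining
   j with (i, j) in pri s (the ORIGINAL priorities), delete s from j's list *)
Definition new_del (R' : {set I}) (T' : {set S}) (D : {set I})
  (mu : I -> option S) (del : I -> {set S}) (j : I) : {set S} :=
  del j :|: [set s in T' | (j \in R') &&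
                [exists i in D, P i (Some s) (mu i) && pri s i j]].

(* eadam_run R T del out final : starting from the current problem (remaining
   students R, schools T, deletions del, fixed assignments out), the
   algorithm computes an SOSM mu of the current subproblem (w.r.t. pri'),
   performs a round (steps (1),(2)), and either stops (all schools removed)
   with final matching the fixed assignments, or continues. *)
Inductive eadam_run : {set I} -> {set S} -> (I -> {set S}) -> (I -> option S)
                      -> (I -> option S) -> Prop :=
| eadam_stop R T del out mu final :
    sosm R T (modpref del) q pri' mu ->
    let U := underdemanded R T del mu in
    let D := removed_students R U mu in
    let out' := fun i => if i \in D then mu i else out i in
    T :\: U = set0 ->
    (forall i, final i = out' i) ->
    eadam_run R T del out final
| eadam_continue R T del out mu final :
    sosm R T (modpref del) q pri' mu ->
    let U := underdemanded R T del mu in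
    let D := removed_students R U mu in
    let R' := R :\: D in
    let T' := T :\: U in
    let out' := fun i => if i \in D then mu i else out i in
    T' <> set0 ->
    eadam_run R' T' (new_del R' T' D mu del) out' final ->
    eadam_run R T del out final.

Definition EA (mu : I -> option S) : Prop :=
  eadam_run [set: I] [set: S] (fun _ => set0) (fun _ => None) mu.

End EADAM.

From mathcomp Require Import all_boot zify.
From Stdlib Require Import FunctionalExtensionality.
Set Implicit Arguments. Unset Strict Implicit. Unset Printing Implicit Defensive.

(* Induction along the run gives soundness
   ([eadam_run_sound]: the outcome is an SOSM for pri); conversely a given
   SOSM mu is fair for the extension [fair_extension] that ranks holders of
   each school above its enviers, and induction on the problem size shows
   that EADAM outputs mu for that extension ([eadam_outputs]). *)

(* A strict total order: the part of [total_order] the argument actually uses. *)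
Definition strict_total (T : Type) (r : rel T) :=
  asymmetric r /\ transitive r /\ complete_rel r.

Lemma total_order_strict (T : Type) (r : rel T) : total_order r -> strict_total r.
Proof. by move=> [[Ha Ht] [_ Hc]]. Qed.

Lemma partial_order_irrefl (T : Type) (r : rel T) x : partial_order r -> ~~ r x x.
Proof. by move=> [Ha _]; apply/negP => rxx; move: (Ha _ _ rxx); rewrite rxx. Qed.

Lemma exists_maximal (J : finType) (r : rel J) (W : {set J}) :
  asymmetric r -> transitive r -> W != set0 ->
  exists2 j, j \in W & forall k, k \in W -> ~~ r k j.
Proof.
move=> Ha Ht /set0Pn [j0 j0W].
case: (arg_minnP (fun j => #|[set x | r x j]|) j0W) => j jW Hmin.
exists j => // k kW; apply/negP => rkj.
have := Hmin k kW; rewrite leqNgt => /negP; apply; apply: proper_card.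
apply/properP; split.
  by apply/subsetP => x; rewrite !inE => rxk; exact: Ht rxk rkj.
exists k; rewrite !inE //; exact: partial_order_irrefl (conj Ha Ht).
Qed.

Section StrictPreferences.
Variables (I S : finType) (Pr : I -> rel (option S)).
Hypothesis HPr : forall i, strict_total (Pr i).

Lemma pref_irr i x : ~~ Pr i x x.
Proof. by case: (HPr i) => Ha [Ht _]; exact: partial_order_irrefl (conj Ha Ht). Qed.
Lemma pref_asym i x y : Pr i x y -> ~~ Pr i y x.
Proof. by case: (HPr i) => Ha _; exact: Ha. Qed.
Lemma pref_trans i x y z : Pr i x y -> Pr i y z -> Pr i x z.
Proof. by case: (HPr i) => _ [Ht _] H1 H2; exact: (Ht y x z). Qed.
Lemma pref_total i x y : x <> y -> Pr i x y \/ Pr i y x.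
Proof. by case: (HPr i) => _ [_ Hc]; exact: Hc. Qed.

Lemma wprefP i x y : reflect (Pr i x y \/ x = y) (wpref Pr i x y).
Proof. by apply: (iffP orP) => -[H|/eqP H]; auto; right; apply/eqP. Qed.
Lemma wpref_refl i x : wpref Pr i x x.
Proof. by rewrite /wpref eqxx orbT. Qed.
Lemma wpref_trans i x y z : wpref Pr i x y -> wpref Pr i y z -> wpref Pr i x z.
Proof.
by move=> /wprefP [H1|<-] /wprefP [H2|<-]; apply/wprefP; auto; left; exact: pref_trans H1 H2.
Qed.
Lemma pref_wpref_trans i x y z : Pr i x y -> wpref Pr i y z -> Pr i x z.
Proof. by move=> H1 /wprefP [H2|<-] //; exact: pref_trans H1 H2. Qed.
Lemma wpref_neq i x y : wpref Pr i x y -> x <> y -> Pr i x y.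
Proof. by move=> /wprefP [H|H] // /(_ H). Qed.
Lemma wprefNpref i x y : ~~ Pr i y x -> wpref Pr i x y.
Proof.
move=> H; apply/wprefP; case: (eqVneq x y) => [->|/eqP ne]; auto.
by case: (pref_total i ne) => H'; auto; rewrite H' in H.
Qed.
Lemma wpref_Npref i x y : wpref Pr i x y -> ~~ Pr i y x.
Proof. by move=> /wprefP [H|<-]; [exact: pref_asym | exact: pref_irr]. Qed.

End StrictPreferences.

Lemma card_filter_sum (I : finType) (A : {set I}) (p : pred I) :
  #|[set x in A | p x]| = \sum_(x in A) p x.
Proof. by rewrite -sum1dep_card big_mkcondr /=; apply: eq_bigr => x _; case: (p x). Qed.

Lemma sum_assigned (I S : finType) (T : {set S}) (A : {set I}) (F : I -> option S) :
  (forall i s, i \in A -> F i = Some s -> s \in T) ->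
  \sum_(s in T) #|[set i in A | F i == Some s]| = #|[set i in A | F i != None]|.
Proof.
move=> HF.
rewrite (eq_bigr (fun s => \sum_(i in A) (F i == Some s))); last first.
  by move=> s _; rewrite card_filter_sum.
rewrite exchange_big /= card_filter_sum; apply: eq_bigr => i iA.
case E: (F i) => [s|] /=; last by rewrite big1.
rewrite (bigD1 s) ?(HF _ _ iA E) //= eqxx big1 // => s' /andP[_ ne].
by case: eqP => // -[] E'; rewrite E' eqxx in ne.
Qed.

Lemma leq_sum_eq (J : finType) (P : pred J) (f g : J -> nat) :
  (forall j, P j -> f j <= g j) -> \sum_(j | P j) g j <= \sum_(j | P j) f j ->
  forall j, P j -> f j = g j.
Proof.
move=> Hle Hs j Pj; apply/eqP; rewrite eqn_leq Hle //=.
move: Hs; rewrite (bigD1 j) //= [X in _ <= X](bigD1 j) //=.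
have : \sum_(k | P k && (k != j)) f k <= \sum_(k | P k && (k != j)) g k.
  by apply: leq_sum => k /andP[Pk _]; exact: Hle.
lia.
Qed.

(* A seat-counting argument shows that
   lam fills every school exactly as much as mu does, and that a student who
   moves leaves a seat at a school that somebody strictly improving takes. *)
Section Domination.
Variables (I S : finType) (R : {set I}) (T : {set S}) (Pr : I -> rel (option S)) (q : S -> nat).
Hypothesis HPr : forall i, strict_total (Pr i).
Variables mu lam : I -> option S.
Hypothesis muM : is_matching R T q mu.
Hypothesis muIR : individually_rational R Pr mu.
Hypothesis muNW : non_wasteful R T Pr q mu.
Hypothesis lamM : is_matching R T q lam.
Hypothesis lam_dom : forall i, i \in R -> wpref Pr i (lam i) (mu i).

Let movers := [set i in R | lam i != mu i].
Let arrivals s := #|[set i in movers | lam i == Some s]|.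
Let departures s := #|[set i in movers | mu i == Some s]|.
Let stayers s := #|[set i in R | (lam i == Some s) && (lam i == mu i)]|.

Lemma movers_R i : i \in movers -> i \in R.
Proof. by rewrite inE => /andP[]. Qed.

Lemma mover_improves i : i \in movers -> Pr i (lam i) (mu i).
Proof. by rewrite inE => /andP[iR ne]; apply: wpref_neq (lam_dom iR) _ => //; exact/eqP. Qed.

Lemma mover_assigned i : i \in movers -> lam i != None.
Proof.
move=> im; apply/eqP => E; have := mover_improves im; rewrite E.
by move: (wpref_Npref HPr (muIR (movers_R im))) => /negbTE ->.
Qed.

Lemma assigned_split (nu : I -> option S) s :
  (nu = lam) \/ (nu = mu) ->
  #|assigned R nu s| = stayers s + #|[set i in movers | nu i == Some s]|.
Proof.
move=> Hnu; rewrite -(cardsID [set i | lam i == mu i]); congr (_ + _).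
  apply: eq_card => i; rewrite !inE; case: (i \in R) => //=.
  by case: (lam i =P mu i) => [E|_]; case: Hnu => ->; rewrite ?E ?andbT ?andbF //= andbC.
by apply: eq_card => i; rewrite !inE; case: (i \in R) => //=; rewrite andbC.
Qed.

Lemma arrival_witness s : 0 < arrivals s ->
  exists j, j \in R /\ lam j = Some s /\ Pr j (Some s) (mu j).
Proof.
rewrite card_gt0 => /set0Pn [j]; rewrite inE => /andP[jm /eqP E].
by exists j; split; [exact: movers_R | split => //; rewrite -E; exact: mover_improves].
Qed.

(* A school receiving a mover was full under mu (non-wastefulness), so it
   cannot gain more movers than it loses. *)
Lemma arrivals_le s : s \in T -> arrivals s <= departures s.
Proof.
move=> sT; case: (posnP (arrivals s)) => [->//|/arrival_witness [j [jR [_ H]]]].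
have := muNW jR sT H; have := lamM.2 _ sT.
rewrite (assigned_split s (or_introl erefl)) (assigned_split s (or_intror erefl)).
by move=> Hl He; rewrite -(leq_add2l (stayers s)) He.
Qed.

Lemma sum_arrivals : \sum_(s in T) arrivals s = #|movers|.
Proof.
rewrite /arrivals sum_assigned; last by move=> i s im; apply: lamM.1; exact: movers_R.
by apply: eq_card => i; rewrite inE; case im: (i \in movers) => //=; exact: mover_assigned.
Qed.

Lemma sum_departures : \sum_(s in T) departures s = #|[set i in movers | mu i != None]|.
Proof. by rewrite sum_assigned // => i s im; apply: muM.1; exact: movers_R. Qed.

(* Every mover arrives somewhere, so the inequalities are equalities. *)
Lemma arrivals_eq s : s \in T -> arrivals s = departures s.
Proof.
apply: leq_sum_eq; first exact: arrivals_le.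
rewrite sum_arrivals sum_departures; apply: subset_leq_card.
by apply/subsetP => i; rewrite inE => /andP[].
Qed.

Lemma seats_preserved s : s \in T -> #|assigned R lam s| = #|assigned R mu s|.
Proof.
move=> sT; rewrite (assigned_split s (or_introl erefl)) (assigned_split s (or_intror erefl)).
by rewrite -/(arrivals s) arrivals_eq.
Qed.

Lemma displaced_seat_taken i : i \in R -> lam i <> mu i ->
  exists s, mu i = Some s /\
    exists j, j \in R /\ lam j = Some s /\ Pr j (Some s) (mu j).
Proof.
move=> iR ne; have im : i \in movers by rewrite inE iR; apply/eqP.
have all_matched : [set i in movers | mu i != None] = movers.
  apply/eqP; rewrite eqEcard; apply/andP; split.
    by apply/subsetP => x; rewrite inE => /andP[].
  rewrite -sum_departures -sum_arrivals leq_eqVlt; apply/orP; left; apply/eqP.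
  by apply: eq_bigr => s sT; rewrite arrivals_eq.
have : i \in [set i in movers | mu i != None] by rewrite all_matched.
rewrite inE im /=; case E: (mu i) => [s|] //= _.
exists s; split => //; apply: arrival_witness.
rewrite arrivals_eq ?(muM.1 _ iR _ E) // /departures card_gt0.
by apply/set0Pn; exists i; rewrite inE im E eqxx.
Qed.

End Domination.

Section Stability.
Variables (I S : finType) (R : {set I}) (T : {set S}) (Pr : I -> rel (option S)) (q : S -> nat).
Hypothesis HPr : forall i, strict_total (Pr i).

Lemma assignedP (mu : I -> option S) s i :
  (i \in assigned R mu s) = (i \in R) && (mu i == Some s).
Proof. by rewrite inE. Qed.

Lemma assigned_ext (f g : I -> option S) s :
  (forall i, i \in R -> f i = g i) -> assigned R f s = assigned R g s.
Proof.
by move=> H; apply/setP => i; rewrite !assignedP; case iR: (i \in R) => //=; rewrite H.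
Qed.

Lemma fairP (pr : S -> rel I) (mu : I -> option S) :
  fair R T Pr pr mu <->
  (forall s i j, s \in T -> i \in R -> j \in R -> mu j = Some s ->
     Pr i (Some s) (mu i) -> ~~ pr s i j).
Proof.
split=> [F s i j sT iR jR Ej H | F [s [i [j [sT [iR [jin [inot [wp Hp]]]]]]]]].
  apply/negP => Hp; apply: F; exists s, i, j; split => //; split => //.
  split; first by rewrite assignedP jR Ej eqxx.
  split.
    rewrite assignedP negb_and; apply/orP; right; apply/eqP => E.
    by rewrite E (negbTE (pref_irr HPr _ _)) in H.
  by split => //; apply/wprefP; left.
move: jin; rewrite assignedP => /andP [jR /eqP Ej].
have Hs : Pr i (Some s) (mu i).
  by apply: wpref_neq wp _ => E; move: inot; rewrite assignedP iR -E eqxx.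
by move: (F _ _ _ sT iR jR Ej Hs); rewrite Hp.
Qed.

Lemma stable_ext (pr : S -> rel I) (f g : I -> option S) :
  (forall i, i \in R -> f i = g i) -> stable R T Pr q pr f -> stable R T Pr q pr g.
Proof.
move=> H [[fT fC] fIR fNW /fairP fF]; split.
- split; first by move=> i iR s; rewrite -H //; exact: fT.
  by move=> s sT; rewrite -(assigned_ext s H); exact: fC.
- by move=> i iR; rewrite -H //; exact: fIR.
- by move=> i s iR sT; rewrite -H // -(assigned_ext s H); exact: fNW.
- by apply/fairP => s i j sT iR jR; rewrite -!H //; exact: fF.
Qed.

Lemma stable_weaken (pr pr' : S -> rel I) (f : I -> option S) :
  (forall s i j, pr s i j -> pr' s i j) -> stable R T Pr q pr' f -> stable R T Pr q pr f.
Proof.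
move=> H [fM fIR fNW /fairP fF]; split => //; apply/fairP => s i j sT iR jR Ej Hi.
by apply: contra (fF _ _ _ sT iR jR Ej Hi); exact: H.
Qed.

(* A matching that every student weakly prefers to a stable one inherits
   individual rationality and non-wastefulness (by [seats_preserved]); only
   fairness remains to be checked. *)
Lemma dominating_stable (pr : S -> rel I) (mu lam : I -> option S) :
  stable R T Pr q pr mu -> is_matching R T q lam ->
  (forall i, i \in R -> wpref Pr i (lam i) (mu i)) ->
  (forall s i j, s \in T -> i \in R -> j \in R -> lam j = Some s ->
     Pr i (Some s) (lam i) -> Pr i (Some s) (mu i) -> ~~ pr s i j) ->
  stable R T Pr q pr lam.
Proof.
move=> [muM muIR muNW _] lamM dom Hfair; split => //.
- by move=> i iR; exact: wpref_trans (dom _ iR) (muIR _ iR).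
- move=> i s iR sT H.
  have H' : Pr i (Some s) (mu i) := pref_wpref_trans HPr H (dom _ iR).
  rewrite (seats_preserved HPr muM muIR muNW lamM dom sT).
  by apply/eqP; rewrite eqn_leq muM.2 //= (muNW _ _ iR sT H').
- apply/fairP => s i j sT iR jR Ej H; apply: Hfair => //.
  exact: (pref_wpref_trans HPr H (dom i iR)).
Qed.

End Stability.

Arguments fairP {I S R T Pr} HPr {pr mu}.

Definition join_matching (I S : finType) (Pr : I -> rel (option S))
  (mu mu' : I -> option S) (i : I) : option S :=
  if Pr i (mu' i) (mu i) then mu' i else mu i.

(* For strict priorities, the join of two stable matchings is stable.  Hence a
   student-optimal stable matching weakly dominates every stable matching. *)
Section StudentOptimality.
Variables (I S : finType) (R : {set I}) (T : {set S}) (Pr : I -> rel (option S)) (q : S -> nat).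
Hypothesis HPr : forall i, strict_total (Pr i).
Variable pr : S -> rel I.
Hypothesis pr_total : forall s, complete_rel (pr s).

Section Join.
Variables mu mu' : I -> option S.
Hypotheses (mu_st : stable R T Pr q pr mu) (mu'_st : stable R T Pr q pr mu').

Local Notation join := (join_matching Pr mu mu').

Lemma join_ge_mu i : wpref Pr i (join i) (mu i).
Proof. by rewrite /join_matching; case: ifP => H; [apply/wprefP; left | exact: wpref_refl]. Qed.

Lemma join_ge_mu' i : wpref Pr i (join i) (mu' i).
Proof.
rewrite /join_matching; case: ifP => H; first exact: wpref_refl.
by apply: wprefNpref => //; rewrite H.
Qed.

Lemma join_cases i : join i = mu i \/ join i = mu' i.
Proof. by rewrite /join_matching; case: ifP; auto. Qed.

(* If some student holding s in mu' prefers s to her mu-seat, everybody holding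
   s in the join holds it in mu' (else two students would each have priority
   over the other at s); otherwise the join's seats at s are mu's. *)
Lemma join_capacity s : s \in T -> #|assigned R join s| <= q s.
Proof.
have [[_ muC] _ _ /(fairP HPr) muF] := mu_st; have [[_ mu'C] _ _ /(fairP HPr) mu'F] := mu'_st.
move=> sT; case: (boolP [exists i in R, (mu' i == Some s) && Pr i (Some s) (mu i)]).
- move=> /existsP [i /and3P [iR /eqP Ei Hi]].
  apply: leq_trans (mu'C _ sT); apply: subset_leq_card; apply/subsetP => j.
  rewrite !assignedP => /andP [jR /eqP Ej]; rewrite jR /=.
  move: Ej; rewrite /join_matching; case: ifP => [_ -> //|Hj Ej].
  apply/eqP; case: (eqVneq (mu' j) (Some s)) => // /eqP ne.
  have ij : i <> j by move=> E; subst; rewrite Ei in ne.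
  case: (pref_total HPr j ne) => H; first by rewrite Ej H in Hj.
  have n1 := mu'F _ _ _ sT jR iR Ei H.
  have n2 := muF _ _ _ sT iR jR Ej Hi.
  by case: (pr_total s ij) => Hp; [rewrite Hp in n2 | rewrite Hp in n1].
- rewrite negb_exists => /forallP Hn.
  apply: leq_trans (muC _ sT); apply: subset_leq_card; apply/subsetP => j.
  rewrite !assignedP => /andP [jR /eqP Ej]; rewrite jR /=.
  move: Ej; rewrite /join_matching; case: ifP => [Hj Ej|_ ->//].
  by move: (Hn j); rewrite jR Ej eqxx -Ej Hj.
Qed.

Lemma join_stable : stable R T Pr q pr join.
Proof.
have [[muT _] _ _ /(fairP HPr) muF] := mu_st; have [[mu'T _] _ _ /(fairP HPr) mu'F] := mu'_st.
have joinM : is_matching R T q join.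
  split; last exact: join_capacity.
  by move=> i iR s; case: (join_cases i) => ->; [exact: muT | exact: mu'T].
apply: (dominating_stable HPr mu_st joinM (fun i _ => join_ge_mu i)).
move=> s i j sT iR jR Ej Hi _; case: (join_cases j) => Ej'; rewrite Ej' in Ej.
- exact: muF _ _ _ sT iR jR Ej (pref_wpref_trans HPr Hi (join_ge_mu i)).
- exact: mu'F _ _ _ sT iR jR Ej (pref_wpref_trans HPr Hi (join_ge_mu' i)).
Qed.

End Join.

Lemma sosm_student_optimal (mu mu' : I -> option S) :
  sosm R T Pr q pr mu -> stable R T Pr q pr mu' ->
  forall i, i \in R -> wpref Pr i (mu i) (mu' i).
Proof.
move=> [mu_st mu_opt] mu'_st i iR; apply: wprefNpref => //; apply/negP => Hi.
apply: mu_opt; exists (join_matching Pr mu mu'); split; first exact: join_stable.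
split; first by move=> j _; exact: join_ge_mu.
by exists i; split => //; rewrite /join_matching Hi.
Qed.

End StudentOptimality.

(* A self-map of a nonempty finite set permutes some nonempty subset of it
   (take a smallest nonempty invariant subset). *)
Lemma selfmap_cycle (J : finType) (f : J -> J) (A : {set J}) :
  A != set0 -> {in A, forall x, f x \in A} ->
  exists C : {set J}, [/\ C \subset A, C != set0 & f @: C = C].
Proof.
move=> Ane fA; pose good (C : {set J}) := [&& C \subset A, C != set0 & f @: C \subset C].
have goodA : good A.
  by rewrite /good subxx Ane /=; apply/subsetP => y /imsetP [x xA ->]; exact: fA.
case: (arg_minnP (fun C : {set J} => #|C|) goodA) => C /and3P [CA Cne fC] Cmin.
exists C; split => //; apply/eqP; rewrite eqEcard fC /=; apply: Cmin.
rewrite /good (subset_trans fC CA) imsetS // andbT.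
by case/set0Pn: Cne => x xC; apply/set0Pn; exists (f x); exact: imset_f.
Qed.

Definition trade_along (I S : finType) (C : {set S}) (d : S -> I)
  (mu : I -> option S) (i : I) : option S :=
  if [pick s in C | d s == i] is Some s then Some s else mu i.

Section ImprovementCycle.
Variables (I S : finType) (R : {set I}) (T : {set S}) (Pr : I -> rel (option S)) (q : S -> nat).
Hypothesis HPr : forall i, strict_total (Pr i).
Variables (pr : S -> rel I) (mu : I -> option S).
Hypothesis mu_st : stable R T Pr q pr mu.
Variables (C : {set S}) (d : S -> I) (f : S -> S).
Hypothesis CT : C \subset T.
Hypothesis fC : f @: C = C.
Hypothesis d_R : {in C, forall s, d s \in R}.
Hypothesis d_desires : {in C, forall s, Pr (d s) (Some s) (mu (d s))}.
Hypothesis d_seat : {in C, forall s, mu (d s) = Some (f s)}.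
Hypothesis d_max : {in C, forall s k, k \in R -> Pr k (Some s) (mu k) -> ~~ pr s k (d s)}.

Local Notation lam := (trade_along C d mu).

Lemma cycle_d_inj : {in C &, injective d}.
Proof.
have finj : {in C &, injective f} by apply/imset_injP; rewrite fC.
move=> s s' sC s'C E; apply: finj => //.
by have := d_seat sC; rewrite E d_seat // => -[].
Qed.

Lemma trade_mover s : s \in C -> lam (d s) = Some s.
Proof.
move=> sC; rewrite /trade_along; case: pickP => [s' /andP [s'C /eqP E]|Hn].
  by rewrite (cycle_d_inj s'C sC E).
by move: (Hn s); rewrite sC eqxx.
Qed.

Lemma trade_cases i : lam i = mu i \/ exists2 s, s \in C & d s = i /\ lam i = Some s.
Proof.
rewrite /trade_along; case: pickP => [s /andP [sC /eqP E]|_]; last by left.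
by right; exists s.
Qed.

Lemma trade_dominates i : wpref Pr i (lam i) (mu i).
Proof.
case: (trade_cases i) => [->|[s sC [<- ->]]]; first exact: wpref_refl.
by apply/wprefP; left; exact: d_desires.
Qed.

(* The seat of t in C vacated by its holder d s (with f s = t) is taken by d t. *)
Lemma trade_capacity t : t \in T -> #|assigned R lam t| <= q t.
Proof.
have [[_ muC] _ _ _] := mu_st; move=> tT; apply: leq_trans (muC _ tT).
case: (boolP (t \in C)) => tC.
- have : t \in f @: C by rewrite fC.
  move=> /imsetP [s1 s1C Et]; set k := d s1.
  have kin : k \in assigned R mu t by rewrite assignedP d_R //= d_seat // Et eqxx.
  apply: (@leq_trans #|d t |: (assigned R mu t :\ k)|).
    apply: subset_leq_card; apply/subsetP => i; rewrite assignedP => /andP [iR].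
    case: (trade_cases i) => [Elam|[s sC [<- ->]] /eqP [->]]; last by rewrite !inE eqxx.
    rewrite Elam => Emu; have [Eik|nik] := eqVneq i k; last by rewrite !inE nik iR Emu orbT.
    have [Es] : Some s1 = Some t by rewrite -(trade_mover s1C) -/k -Eik Elam (eqP Emu).
    by rewrite !inE Eik /k Es eqxx.
  by rewrite cardsU1 (cardsD1 k (assigned R mu t)) kin; case: (d t \notin _).
- apply: subset_leq_card; apply/subsetP => i; rewrite !assignedP => /andP [iR].
  rewrite iR; case: (trade_cases i) => [->//|[s sC [_ ->]] /eqP [Est]].
  by move: tC; rewrite -Est sC.
Qed.

Lemma trade_stable : stable R T Pr q pr lam.
Proof.
have [[muT _] _ _ /(fairP HPr) muF] := mu_st.
have lamM : is_matching R T q lam.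
  split; last exact: trade_capacity.
  move=> i iR s; case: (trade_cases i) => [->|[s' s'C [_ ->]] [<-]]; first exact: muT.
  exact: (subsetP CT).
apply: (dominating_stable HPr mu_st lamM (fun i _ => trade_dominates i)).
move=> s i j sT iR jR; case: (trade_cases j) => [-> Ej _ Hi|[s' s'C [<- ->]] [<-] _ Hi].
- exact: muF _ _ _ sT iR jR Ej Hi.
- exact: d_max s'C i iR Hi.
Qed.

End ImprovementCycle.

(* If a student-optimal stable matching for strict priorities assigns every
   student while schools remain, some school is underdemanded: otherwise, let
   each school point to the seat of its highest-priority desirer; the
   resulting improvement cycle would Pareto improve it. *)
Lemma sosm_underdemanded (I S : finType) (R : {set I}) (T : {set S})
  (Pr : I -> rel (option S)) (q : S -> nat) (pr : S -> rel I) (mu : I -> option S) :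
  (forall i, strict_total (Pr i)) ->
  (forall s, asymmetric (pr s)) -> (forall s, transitive (pr s)) ->
  sosm R T Pr q pr mu -> T != set0 -> (forall i, i \in R -> mu i <> None) ->
  exists2 s, s \in T & forall i, i \in R -> ~~ Pr i (Some s) (mu i).
Proof.
move=> HPr pr_asym pr_trans [mu_st mu_opt] Tne matched; have [[muT _] _ _ _] := mu_st.
case: (boolP [exists s in T, [forall i in R, ~~ Pr i (Some s) (mu i)]]).
  move=> /existsP [s /andP [sT /forallP H]]; exists s => // i iR.
  by move: (H i); rewrite iR.
rewrite negb_exists => /forallP no_underdemanded; exfalso.
pose desirers s := [set j in R | Pr j (Some s) (mu j)].
have desired s : s \in T -> desirers s != set0.
  move=> sT; move: (no_underdemanded s); rewrite sT /= negb_forall => /existsP [j].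
  by rewrite negb_imply negbK => /andP [jR H]; apply/set0Pn; exists j; rewrite inE jR.
have [s0 s0T] := set0Pn _ Tne; have [i0 _] := set0Pn _ (desired _ s0T).
pose d s := odflt i0 [pick j in desirers s | [forall k in desirers s, ~~ pr s k j]].
have dP s : s \in T -> d s \in desirers s /\ forall k, k \in desirers s -> ~~ pr s k (d s).
  move=> sT; rewrite /d; case: pickP => [j /andP [jW /forallP H] /=|Hn].
    by split => // k kW; move: (H k); rewrite kW.
  have [j jW Hj] := exists_maximal (pr_asym s) (pr_trans s) (desired _ sT).
  by move: (Hn j); rewrite jW /= => /negP []; apply/forallP => k; apply/implyP; exact: Hj.
have d_R s : s \in T -> d s \in R by move=> /dP [+ _]; rewrite inE => /andP[].
have d_desires s : s \in T -> Pr (d s) (Some s) (mu (d s)).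
  by move=> /dP [+ _]; rewrite inE => /andP[].
pose f s := odflt s0 (mu (d s)).
have d_seat s : s \in T -> mu (d s) = Some (f s).
  by move=> sT; rewrite /f; case E: (mu (d s)) => //; have := matched _ (d_R _ sT).
have fT : {in T, forall s, f s \in T} by move=> s sT; apply: muT (d_R _ sT) _ (d_seat _ sT).
have [C [CT Cne fC]] := selfmap_cycle Tne fT.
have inT s : s \in C -> s \in T := subsetP CT s.
have dC_R : {in C, forall s, d s \in R} by move=> s /inT; exact: d_R.
have dC_desires : {in C, forall s, Pr (d s) (Some s) (mu (d s))}.
  by move=> s /inT; exact: d_desires.
have dC_seat : {in C, forall s, mu (d s) = Some (f s)} by move=> s /inT; exact: d_seat.
have dC_max : {in C, forall s k, k \in R -> Pr k (Some s) (mu k) -> ~~ pr s k (d s)}.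
  by move=> s sC k kR Hk; apply: (dP _ (inT _ sC)).2; rewrite inE kR Hk.
apply: mu_opt; exists (trade_along C d mu); split.
  exact: (trade_stable HPr mu_st CT fC dC_R dC_desires dC_seat dC_max).
split; first by move=> i _; exact: trade_dominates dC_desires i.
have [s sC] := set0Pn _ Cne; exists (d s); split; first exact: dC_R.
by rewrite (trade_mover fC dC_seat sC); exact: dC_desires.
Qed.

Section ModifiedPreferences.
Variables (I S : finType) (P : I -> rel (option S)).
Hypothesis HP : forall i, strict_total (P i).

Lemma modpref_strict_total del j : strict_total (modpref P del j).
Proof.
have [Ha [Ht Hc]] := HP j; split; [|split].
- move=> x y; rewrite /modpref.
  by case: (is_deleted del j x); case: (is_deleted del j y) => //=; exact: Ha.
- move=> y x z; rewrite /modpref.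
  case: (is_deleted del j x); case: (is_deleted del j y);
    by case: (is_deleted del j z) => //=; exact: Ht.
- move=> x y ne; rewrite /modpref.
  by case: (is_deleted del j x); case: (is_deleted del j y) => //=; auto; exact: Hc.
Qed.

Lemma modpref_undeleted del j x y : ~~ is_deleted del j x -> ~~ is_deleted del j y ->
  modpref P del j x y = P j x y.
Proof. by rewrite /modpref => /negbTE -> /negbTE ->. Qed.

Lemma modprefE del j x y : ~~ is_deleted del j y -> modpref P del j x y ->
  ~~ is_deleted del j x && P j x y.
Proof. by rewrite /modpref => /negbTE ->; case: (is_deleted del j x). Qed.

Lemma acceptable_undeleted del j x : wpref (modpref P del) j x None -> ~~ is_deleted del j x.
Proof. by move=> /orP [/(modprefE (isT : ~~ is_deleted del j None)) /andP[]|/eqP ->]. Qed.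

Section MoreDeletions.
Variables del del' : I -> {set S}.
Hypothesis sub_del : forall j, del j \subset del' j.

Lemma undeleted_sub j x : ~~ is_deleted del' j x -> ~~ is_deleted del j x.
Proof. by case: x => //= s; apply: contra => H; exact: (subsetP (sub_del j)). Qed.

Lemma modpref_down j x y :
  ~~ is_deleted del' j y -> modpref P del' j x y -> modpref P del j x y.
Proof.
move=> ny /(modprefE ny) /andP [nx H].
by rewrite modpref_undeleted // undeleted_sub.
Qed.

Lemma modpref_up j x y : ~~ is_deleted del' j x -> ~~ is_deleted del' j y ->
  modpref P del j x y -> modpref P del' j x y.
Proof. by move=> nx ny; rewrite !modpref_undeleted // undeleted_sub. Qed.

Lemma wmodpref_down j x y :
  ~~ is_deleted del' j y -> wpref (modpref P del') j x y -> wpref (modpref P del) j x y.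
Proof. by move=> ny /orP [H|H]; apply/orP; [left; exact: modpref_down H | right]. Qed.

Lemma wmodpref_up j x y : ~~ is_deleted del' j x -> ~~ is_deleted del' j y ->
  wpref (modpref P del) j x y -> wpref (modpref P del') j x y.
Proof. by move=> nx ny /orP [H|H]; apply/orP; [left; exact: modpref_up H | right]. Qed.

End MoreDeletions.

Lemma modpref_nodel : modpref P (fun _ => set0) = P.
Proof.
apply: functional_extensionality => j; apply: functional_extensionality => x.
apply: functional_extensionality => y.
by rewrite modpref_undeleted //; [case: x | case: y] => //= s; rewrite inE.
Qed.

End ModifiedPreferences.

Section Round.
Variables (I S : finType) (P : I -> rel (option S)) (q : S -> nat) (pri pri' : S -> rel I).
Hypothesis HP : forall i, strict_total (P i).
Hypothesis Hpri : forall s, partial_order (pri s).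
Hypothesis Hext : forall s i j, pri s i j -> pri' s i j.

Definition deletion_record (R : {set I}) (T : {set S}) (del : I -> {set S})
  (out : I -> option S) :=
  forall j s, j \in R -> s \in T ->
    s \in del j <-> exists l, [/\ l \notin R, P l (Some s) (out l) & pri s l j].

Lemma deletion_record_init (out : I -> option S) :
  deletion_record [set: I] [set: S] (fun _ => set0) out.
Proof. by move=> j s _ _; rewrite inE; split => // -[l []]; rewrite inE. Qed.

Lemma deleted_below R T del out l i s : deletion_record R T del out ->
  l \in R -> i \in R -> s \in T -> s \in del l -> pri s l i -> s \in del i.
Proof.
move=> Hrec lR iR sT /(Hrec _ _ lR sT) [l' [l'R Hl' pl']] pli.
have [_ Ht] := Hpri s.
by apply/(Hrec _ _ iR sT); exists l'; split => //; exact: Ht pl' pli.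
Qed.

Section Step.
Variables (R : {set I}) (T : {set S}) (del : I -> {set S}) (out mu : I -> option S).
Hypothesis Hrec : deletion_record R T del out.
Hypothesis Hmu : stable R T (modpref P del) q pri' mu.

Definition round_closed := underdemanded P R T del mu.
Definition round_removed := removed_students R round_closed mu.
Definition next_students := R :\: round_removed.
Definition next_schools := T :\: round_closed.
Definition next_del := new_del P pri next_students next_schools round_removed mu del.
Definition next_out i := if i \in round_removed then mu i else out i.

Local Notation U := round_closed.
Local Notation D := round_removed.
Local Notation R' := next_students.
Local Notation T' := next_schools.
Local Notation del' := next_del.

Let HPd := modpref_strict_total HP del.
Let HPd' := modpref_strict_total HP del'.

Lemma closed_nobody_prefers s i : s \in U -> i \in R -> ~~ modpref P del i (Some s) (mu i).
Proof. by rewrite inE => /andP [_ /forallP H] iR; move: (H i); rewrite iR. Qed.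
Lemma removed_R i : i \in D -> i \in R.
Proof. by rewrite inE => /andP[]. Qed.
Lemma removed_closed i s : i \in D -> mu i = Some s -> s \in U.
Proof. by rewrite inE => /andP [_]; case: (mu i) => // s' H [<-]. Qed.
Lemma next_studentsP i : (i \in R') = (i \notin D) && (i \in R).
Proof. by rewrite inE. Qed.
Lemma next_schoolsP s : (s \in T') = (s \notin U) && (s \in T).
Proof. by rewrite inE. Qed.
Lemma next_students_R i : i \in R' -> i \in R.
Proof. by rewrite next_studentsP => /andP[]. Qed.
Lemma next_schools_T s : s \in T' -> s \in T.
Proof. by rewrite next_schoolsP => /andP[]. Qed.

Lemma staying_seat i : i \in R -> i \notin D -> exists s, mu i = Some s /\ s \in T'.
Proof.
move=> iR; rewrite inE iR /=; case E: (mu i) => [s|] // nU; exists s; split => //.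
by have [[muT _] _ _ _] := Hmu; rewrite next_schoolsP nU (muT _ iR _ E).
Qed.

Lemma next_del_sub j : del j \subset del' j.
Proof. exact: subsetUl. Qed.

Lemma next_delP j s : s \in del' j <-> s \in del j \/
  [/\ s \in T', j \in R' & exists l, [/\ l \in D, P l (Some s) (mu l) & pri s l j]].
Proof.
rewrite /next_del /new_del in_setU inE; split.
  case/orP => [H|/andP [sT /andP [jR /existsP [l /andP [lD /andP [H1 H2]]]]]]; first by left.
  by right; split => //; exists l.
case=> [->//|[-> -> [l [lD H1 H2]]]]; apply/orP; right.
by apply/existsP; exists l; rewrite lD H1 H2.
Qed.

Lemma next_record : deletion_record R' T' del' next_out.
Proof.
move=> j s jR sT; rewrite next_delP /next_out; split.
- case=> [sd|[_ _ [l [lD H1 H2]]]].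
  + have [l [lR H1 H2]] := (Hrec (next_students_R jR) (next_schools_T sT)).1 sd.
    have lD : l \notin D by apply: contra lR; exact: removed_R.
    by exists l; rewrite next_studentsP negb_and lR orbT (negbTE lD).
  + by exists l; rewrite next_studentsP lD.
- move=> [l [lR' H1 H2]]; move: H1; case: ifP => lD H1.
  + by right; split => //; exists l.
  + left; apply/(Hrec (next_students_R jR) (next_schools_T sT)).
    by exists l; move: lR'; rewrite next_studentsP lD.
Qed.

Lemma assigned_next (lam : I -> option S) s : (forall i, i \in D -> lam i = mu i) ->
  s \in T' -> assigned R' lam s = assigned R lam s.
Proof.
move=> Hl sT; apply/setP => i; rewrite !assignedP next_studentsP.
case iD: (i \in D) => //=; rewrite (removed_R iD) /= Hl //; symmetry.
apply/negbTE/eqP => E; move: sT; by rewrite next_schoolsP (removed_closed iD E).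
Qed.

(* A stable matching of the current problem that agrees with mu on removed
   students and keeps the others at remaining schools restricts to a stable
   matching of the next problem: the new deletions concern only schools whose
   envious removed student would otherwise block it. *)
Lemma restrict_stable (pr : S -> rel I) (lam : I -> option S) :
  (forall s i j, pri s i j -> pr s i j) ->
  stable R T (modpref P del) q pr lam ->
  (forall i, i \in D -> lam i = mu i) ->
  (forall i, i \in R' -> forall s, lam i = Some s -> s \in T') ->
  stable R' T' (modpref P del') q pr lam.
Proof.
move=> ext [[lT lC] lIR lNW /(fairP HPd) lF] lD lT'.
(* A new deletion of lam i from i's list would come from a removed student l
   envying it with priority over i, and l would block lam. *)
have undel i : i \in R' -> ~~ is_deleted del' i (lam i).
  move=> iR; case E: (lam i) => [s|] //=; have sT' := lT' _ iR _ E.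
  have /acceptable_undeleted := lIR _ (next_students_R iR); rewrite E /= => nd0.
  apply/negP => /next_delP [sd|[_ _ [l [lD0 H1 H2]]]]; first by rewrite sd in nd0.
  have lR := removed_R lD0.
  have nsl : s \notin del l.
    apply/negP => sdl.
    have := deleted_below Hrec lR (next_students_R iR) (next_schools_T sT') sdl H2.
    by rewrite (negbTE nd0).
  have /acceptable_undeleted ndl := lIR _ lR.
  have Hm : modpref P del l (Some s) (lam l) by rewrite modpref_undeleted // (lD _ lD0).
  by move: (lF _ _ _ (next_schools_T sT') lR (next_students_R iR) E Hm); rewrite ext.
split.
- split; first exact: lT'.
  by move=> s sT; rewrite assigned_next //; apply: lC; exact: next_schools_T.
- move=> i iR; have none_kept : ~~ is_deleted del' i None by [].
  exact: (wmodpref_up next_del_sub (undel _ iR) none_kept (lIR _ (next_students_R iR))).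
- move=> i s iR sT H; rewrite assigned_next //.
  apply: lNW (next_students_R iR) (next_schools_T sT) _.
  exact: (modpref_down next_del_sub (undel _ iR) H).
- apply/(fairP HPd') => s i j sT iR jR Ej H; apply: lF => //;
    try exact: next_students_R; try exact: next_schools_T.
  exact: (modpref_down next_del_sub (undel _ iR) H).
Qed.

Lemma restricted_mu_stable : stable R' T' (modpref P del') q pri' mu.
Proof.
apply: restrict_stable => // i iR s E; move: (iR); rewrite next_studentsP => /andP [nD iR0].
by have [s' [E' sT]] := staying_seat iR0 nD; rewrite E in E'; case: E' => ->.
Qed.

(* A matching weakly preferred to mu by everybody leaves the removed students
   in place (their schools are underdemanded, and a removed unmatched student
   could only move by taking a seat nobody wants) and keeps the others at
   remaining schools. *)
Lemma dominating_fixes_removed (lam : I -> option S) : is_matching R T q lam ->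
  (forall i, i \in R -> wpref (modpref P del) i (lam i) (mu i)) ->
  (forall i, i \in D -> lam i = mu i) /\
  (forall i, i \in R' -> forall s, lam i = Some s -> s \in T').
Proof.
move=> lM dom; have [muM muIR muNW _] := Hmu; split.
- move=> i iD; apply/eqP; apply/negPn/negP => /eqP ne.
  have [s [E [j [jR [_ H]]]]] := displaced_seat_taken HPd muM muIR muNW lM dom (removed_R iD) ne.
  by move: (closed_nobody_prefers (removed_closed iD E) jR); rewrite H.
- move=> i iR s E; have iR0 := next_students_R iR.
  rewrite next_schoolsP (lM.1 _ iR0 _ E) andbT; apply/negP => sU.
  have := closed_nobody_prefers sU iR0; rewrite -E => H.
  have := dom _ iR0; move/orP => [H'|/eqP E']; first by rewrite H' in H.
  by move: iR; rewrite next_studentsP inE iR0 -E' E sU.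
Qed.

(* A blocking pair
   (i, j) at s would be recorded as a deletion of s from j's list. *)
Lemma glue_stable (lam : I -> option S) :
  (forall i, i \in D -> lam i = mu i) ->
  stable R' T' (modpref P del') q pri lam ->
  (forall i, i \in R' -> wpref (modpref P del') i (lam i) (mu i)) ->
  stable R T (modpref P del) q pri lam /\
  (forall i, i \in R -> wpref (modpref P del) i (lam i) (mu i)).
Proof.
move=> lD [[lT lC] lIR _ /(fairP HPd') lF] dom'.
have [[muT muC] muIR _ /(fairP HPd) muF] := Hmu.
have [_ mu'IR _ _] := restricted_mu_stable.
have stays i : i \in R -> i \notin D -> i \in R' by move=> iR iD; rewrite next_studentsP iD.
have dom : forall i, i \in R -> wpref (modpref P del) i (lam i) (mu i).
  move=> i iR; case: (boolP (i \in D)) => iD; first by rewrite lD // wpref_refl.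
  have iR' := stays _ iR iD.
  exact: (wmodpref_down next_del_sub (acceptable_undeleted (mu'IR _ iR')) (dom' _ iR')).
have lamM : is_matching R T q lam.
  split=> [i iR s|s sT].
    case: (boolP (i \in D)) => iD; first by rewrite lD //; exact: muT.
    by move=> E; apply: next_schools_T; exact: lT (stays _ iR iD) _ E.
  case sT': (s \in T'); first by rewrite -assigned_next //; exact: lC.
  apply: leq_trans (muC _ sT); apply: subset_leq_card; apply/subsetP => i.
  rewrite !assignedP => /andP [iR /eqP E]; rewrite iR /=.
  case: (boolP (i \in D)) => iD; first by rewrite -lD // E.
  by move: sT'; rewrite (lT _ (stays _ iR iD) _ E).
split=> //; apply: (dominating_stable HPd (stable_weaken HPd Hext Hmu) lamM dom).
move=> s i j sT iR jR Ej Hlam Hmui.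
case: (boolP (j \in D)) => jD.
  by rewrite lD // in Ej; apply: contra (muF _ _ _ sT iR jR Ej Hmui) => /Hext.
have jR' := stays _ jR jD; have sT' := lT _ jR' _ Ej.
have /acceptable_undeleted := lIR _ jR'; rewrite Ej /= => ndj.
have [nsi Psi] := andP (modprefE (acceptable_undeleted (muIR _ iR)) Hmui).
apply/negP => Hp; case: (boolP (i \in D)) => iD.
  by move: ndj; rewrite (next_delP j s).2 //; right; split => //; exists i.
have iR' := stays _ iR iD.
case: (boolP (s \in del' i)) => [/next_delP [sd|[_ _ [l [lD0 H1 H2]]]]|sdi].
- by move: nsi; rewrite /= sd.
- have [_ Ht] := Hpri s.
  move: ndj; rewrite (next_delP j s).2 //; right; split => //.
  by exists l; split => //; exact: Ht H2 Hp.
- have /acceptable_undeleted ndi := lIR _ iR'.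
  have nsi' : ~~ is_deleted del' i (Some s) := sdi.
  by move: (lF _ _ _ sT' iR' jR' Ej (modpref_up next_del_sub nsi' ndi Hlam)); rewrite Hp.
Qed.

End Step.
End Round.

Section Soundness.
Variables (I S : finType) (P : I -> rel (option S)) (q : S -> nat) (pri pri' : S -> rel I).
Hypothesis HP : forall i, strict_total (P i).
Hypothesis Hpri : forall s, partial_order (pri s).
Hypothesis Hext : forall s i j, pri s i j -> pri' s i j.
Hypothesis pri'_total : forall s, complete_rel (pri' s).

Definition sound_outcome (R : {set I}) (T : {set S}) (del : I -> {set S})
  (out final : I -> option S) :=
  [/\ forall i, i \notin R -> final i = out i,
      stable R T (modpref P del) q pri final,
      exists2 mu0, sosm R T (modpref P del) q pri' mu0 &
        forall i, i \in R -> wpref (modpref P del) i (final i) (mu0 i) &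
      ~ exists lam, stable R T (modpref P del) q pri lam /\
          pareto_dominates R (modpref P del) lam final].

Section RoundSoundness.
Variables (R : {set I}) (T : {set S}) (del : I -> {set S}) (out mu : I -> option S).
Hypothesis Hrec : deletion_record P pri R T del out.
Hypothesis Hmu : stable R T (modpref P del) q pri' mu.

Local Notation R' := (next_students P R T del mu).
Local Notation T' := (next_schools P R T del mu).
Local Notation del' := (next_del P pri R T del mu).
Let HPd := modpref_strict_total HP del.

Lemma dominating_restricts (lam : I -> option S) :
  stable R T (modpref P del) q pri lam ->
  (forall i, i \in R -> wpref (modpref P del) i (lam i) (mu i)) ->
  (forall i, i \in round_removed P R T del mu -> lam i = mu i) /\
  stable R' T' (modpref P del') q pri lam.
Proof.
move=> lst dom; have [lM _ _ _] := lst.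
have [Hfix Hval] := dominating_fixes_removed HP Hmu lM dom.
by split=> //; exact: (restrict_stable HP Hpri Hrec (fun _ _ _ H => H) lst Hfix Hval).
Qed.

(* If a stable matching dominating mu cannot be improved on the next problem,
   it cannot be improved at all: an improvement would fix the removed
   students and restrict to the next problem. *)
Lemma no_improvement (final : I -> option S) :
  stable R T (modpref P del) q pri final ->
  (forall i, i \in R -> wpref (modpref P del) i (final i) (mu i)) ->
  ~ (exists lam, stable R' T' (modpref P del') q pri lam /\
       pareto_dominates R' (modpref P del') lam final) ->
  ~ exists lam, stable R T (modpref P del) q pri lam /\
      pareto_dominates R (modpref P del) lam final.
Proof.
move=> fst fge Hnext [lam [lst [ldom [i [iR Hi]]]]].
have [fD [_ fIR' _ _]] := dominating_restricts fst fge.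
have ldom_mu j : j \in R -> wpref (modpref P del) j (lam j) (mu j).
  by move=> jR; exact: wpref_trans (ldom _ jR) (fge _ jR).
have [lD lst'] := dominating_restricts lst ldom_mu; have [_ lIR' _ _] := lst'.
have lift j x y : j \in R' -> wpref (modpref P del') j x None ->
    wpref (modpref P del') j y None ->
    modpref P del j x y -> modpref P del' j x y.
  have sub k : del k \subset del' k by exact: next_del_sub.
  by move=> _ /acceptable_undeleted nx /acceptable_undeleted ny; exact: (modpref_up sub nx ny).
apply: Hnext; exists lam; split; first exact: lst'.
split.
  move=> j jR; move/orP: (ldom _ (next_students_R jR)) => [H|/eqP ->].
    by apply/orP; left; exact: lift (lIR' _ jR) (fIR' _ jR) H.
  exact: wpref_refl.
have iR' : i \in R'.
  rewrite next_studentsP iR andbT; apply/negP => iD.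
  by move: Hi; rewrite lD // fD // (negbTE (pref_irr HPd _ _)).
by exists i; split => //; exact: lift (lIR' _ iR') (fIR' _ iR') Hi.
Qed.

End RoundSoundness.

(* By induction along the run: at a stop all students are removed with their
   SOSM seats; otherwise the outcome of the next problem dominates its SOSM,
   which dominates the restriction of mu, and glues back. *)
Lemma eadam_run_sound R T del out final :
  eadam_run P q pri pri' R T del out final -> deletion_record P pri R T del out ->
  sound_outcome R T del out final.
Proof.
rewrite /sound_outcome; elim=> {R T del out final}
  [R T del out mu final Hs U D out' HT Hf Hrec
  |R T del out mu final Hs U D R' T' out' _ _ IH Hrec].
- have Hmu := Hs.1; have HPd := modpref_strict_total HP del.
  have stays_none i : i \in R -> i \notin D -> False.
    move=> iR iD; have [s [_]] := staying_seat Hmu iR iD.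
    by rewrite /next_schools -/U HT inE.
  have finR i : i \in R -> final i = mu i.
    by move=> iR; rewrite Hf /out'; case: ifP => // /negbT /(stays_none _ iR).
  have fst : stable R T (modpref P del) q pri final.
    apply: (stable_ext HPd (fun i iR => esym (finR i iR))).
    exact: (stable_weaken HPd Hext Hmu).
  have fge i : i \in R -> wpref (modpref P del) i (final i) (mu i).
    by move=> iR; rewrite finR // wpref_refl.
  split=> //.
  + move=> i iR; have iD : i \notin D by apply: contra iR; exact: removed_R.
    by rewrite Hf /out' (negbTE iD).
  + by exists mu.
  + apply: (no_improvement Hrec Hmu fst fge) => -[lam [_ [_ [i [iR _]]]]].
    by move: iR; rewrite next_studentsP => /andP [iD iR]; exact: stays_none iR iD.
- have Hmu := Hs.1; have HPd' := modpref_strict_total HP (next_del P pri R T del mu).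
  have [Hout Hst [mu0 Hmu0 Hge0] Hnd] := IH (next_record Hrec).
  have outD i : i \in D -> final i = mu i.
    by move=> iD; rewrite Hout /out' ?iD // next_studentsP iD.
  have ge' i : i \in R' -> wpref (modpref P (next_del P pri R T del mu)) i (final i) (mu i).
    move=> iR; apply: (wpref_trans HPd' (Hge0 _ iR)).
    exact: (sosm_student_optimal HPd' pri'_total Hmu0
              (restricted_mu_stable HP Hpri Hext Hrec Hmu) iR).
  have [Gst Gge] := glue_stable HP Hpri Hext Hrec Hmu outD Hst ge'.
  split=> //.
  + move=> i iR; have iD : i \notin D by apply: contra iR; exact: removed_R.
    by rewrite Hout /out' ?(negbTE iD) // next_studentsP (negbTE iR) andbF.
  + by exists mu.
  + exact: (no_improvement Hrec Hmu Gst Gge Hnd).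
Qed.

End Soundness.

(* Every strict partial order on a finite type extends to a total order: rank
   elements by the number of elements below them, breaking ties by the
   enumeration of the type. *)
Section Linearize.
Variables (J : finType) (r : rel J).

Definition linear_key (a : J) := #|[set y | r y a]| * #|J| + enum_rank a.
Definition linearize : rel J := fun a b => linear_key a < linear_key b.

Lemma linearize_total : total_order linearize.
Proof.
rewrite /linearize; split; [split|split].
- by move=> x y H; rewrite -leqNgt ltnW.
- by move=> y x z; exact: ltn_trans.
- by move=> x y z; rewrite -!leqNgt => H1 H2; exact: leq_trans H2 H1.
- move=> x y ne; case: (ltngtP (linear_key x) (linear_key y)); auto => E; exfalso.
  apply: ne; apply: enum_rank_inj; apply/val_inj => /=.
  have := congr1 (fun n => n %% #|J|) E.
  by rewrite /linear_key !modnMDl !modn_small.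
Qed.

Lemma linearize_sub : partial_order r -> forall a b, r a b -> linearize a b.
Proof.
move=> [Ha Ht] a b rab.
have lt_below : #|[set y | r y a]| < #|[set y | r y b]|.
  apply: proper_card; apply/properP; split.
    by apply/subsetP => y; rewrite !inE => rya; exact: Ht rya rab.
  by exists a; rewrite !inE // partial_order_irrefl.
have rank_lt : (enum_rank a : nat) < #|J| := ltn_ord _.
rewrite /linearize /linear_key.
have : #|[set y | r y a]| * #|J| + #|J| <= #|[set y | r y b]| * #|J|.
  by rewrite addnC -mulSn leq_mul2r lt_below orbT.
lia.
Qed.

End Linearize.

Section Raise.
Variables (J : finType) (r : rel J) (H W : {set J}).
Hypothesis r_po : partial_order r.
Hypothesis separated : forall w m, w \in W -> m \in H -> ~~ ((w == m) || r w m).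

Definition raise : rel J := fun a b =>
  r a b || [exists m in H, exists w in W, ((a == m) || r a m) && ((w == b) || r w b)].

Let r_trans a b c : r a b -> r b c -> r a c.
Proof. by have [_ Ht] := r_po; move=> H1 H2; exact: Ht H1 H2. Qed.

Lemma wr_trans a b c : (a == b) || r a b -> (b == c) || r b c -> (a == c) || r a c.
Proof.
move=> /orP [/eqP ->//|H1] /orP [/eqP <-|H2]; first by rewrite H1 orbT.
by rewrite (r_trans H1 H2) orbT.
Qed.

Lemma raise_sub a b : r a b -> raise a b.
Proof. by rewrite /raise => ->. Qed.

Lemma raise_HW m w : m \in H -> w \in W -> raise m w.
Proof.
by move=> mH wW; apply/orP; right; apply/existsP; exists m; rewrite mH;
  apply/existsP; exists w; rewrite wW !eqxx.
Qed.

Lemma raise_trans : transitive raise.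
Proof.
move=> b a c; rewrite /raise.
move=> /orP [H1|/existsP [m1 /andP [m1H /existsP [w1 /and3P [w1W A1 B1]]]]]
  /orP [H2|/existsP [m2 /andP [m2H /existsP [w2 /and3P [w2W A2 B2]]]]].
- by rewrite (r_trans H1 H2).
- apply/orP; right; apply/existsP; exists m2; rewrite m2H; apply/existsP; exists w2.
  by rewrite w2W B2 andbT; apply: wr_trans A2; rewrite H1 orbT.
- apply/orP; right; apply/existsP; exists m1; rewrite m1H; apply/existsP; exists w1.
  by rewrite w1W A1; apply: wr_trans B1 _; rewrite H2 orbT.
- by move: (separated w1W m2H); rewrite (wr_trans B1 A2).
Qed.

Lemma raise_irr a : ~~ raise a a.
Proof.
rewrite /raise negb_or partial_order_irrefl //=; apply/existsP.
move=> [m /andP [mH /existsP [w /and3P [wW A B]]]].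
by move: (separated wW mH); rewrite (wr_trans B A).
Qed.

Lemma raise_partial_order : partial_order raise.
Proof.
split; last exact: raise_trans.
move=> a b Hab; apply/negP => Hba; move: (raise_irr a).
by rewrite (raise_trans Hab Hba).
Qed.

End Raise.

Definition fair_extension (I S : finType) (P : I -> rel (option S)) (pri : S -> rel I)
  (mu : I -> option S) (s : S) : rel I :=
  linearize (raise (pri s) [set m | mu m == Some s] [set w | P w (Some s) (mu w)]).

Lemma fair_extensionP (I S : finType) (P : I -> rel (option S)) (pri : S -> rel I)
  (mu : I -> option S) :
  (forall i, strict_total (P i)) -> (forall s, partial_order (pri s)) ->
  fair [set: I] [set: S] P pri mu ->
  extension pri (fair_extension P pri mu) /\
  fair [set: I] [set: S] P (fair_extension P pri mu) mu.
Proof.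
move=> HP Hpri /(fairP HP) Hfair.
have separated s w m : w \in [set w | P w (Some s) (mu w)] -> m \in [set m | mu m == Some s] ->
    ~~ ((w == m) || pri s w m).
  rewrite !inE => Hw /eqP Hm; rewrite negb_or.
  apply/andP; split; first by apply: contraL Hw => /eqP ->; rewrite Hm pref_irr.
  exact: Hfair _ _ _ (in_setT s) (in_setT w) (in_setT m) Hm Hw.
have raise_po s := raise_partial_order (Hpri s) (@separated s).
split.
  move=> s; split; first exact: linearize_total.
  by move=> i j H; apply: linearize_sub (raise_po s) _ _ _; exact: raise_sub.
apply/(fairP HP) => s i j _ _ _ Hj Hi.
have [[Ha _] _] := linearize_total (raise (pri s) [set m | mu m == Some s]
                                          [set w | P w (Some s) (mu w)]).
apply: Ha; apply: linearize_sub (raise_po s) _ _ _.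
by apply: raise_HW; rewrite inE ?Hj ?Hi.
Qed.

(* Along the
   run, mu stays stable (for pri') and unimprovable (for pri) on each
   subproblem, hence is the SOSM computed at every round; the rounds remove
   students or schools, and the assignments fixed are mu's. *)
Section Completeness.
Variables (I S : finType) (P : I -> rel (option S)) (q : S -> nat) (pri pri' : S -> rel I).
Variable mu : I -> option S.
Hypothesis HP : forall i, strict_total (P i).
Hypothesis Hpri : forall s, partial_order (pri s).
Hypothesis Hext : forall s i j, pri s i j -> pri' s i j.
Hypothesis pri'_total : forall s, total_order (pri' s).

Definition unimprovable (R : {set I}) (T : {set S}) (del : I -> {set S}) :=
  forall lam, stable R T (modpref P del) q pri lam ->
    (forall i, i \in R -> wpref (modpref P del) i (lam i) (mu i)) ->
    forall i, i \in R -> lam i = mu i.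

Section CompletenessRound.
Variables (R : {set I}) (T : {set S}) (del : I -> {set S}) (out : I -> option S).
Hypothesis Hrec : deletion_record P pri R T del out.
Hypothesis Hmu : stable R T (modpref P del) q pri' mu.
Hypothesis Hunimp : unimprovable R T del.

Local Notation R' := (next_students P R T del mu).
Local Notation T' := (next_schools P R T del mu).
Local Notation D := (round_removed P R T del mu).
Let HPd := modpref_strict_total HP del.

(* Matchings stable for pri' are stable for pri, so mu is the SOSM for pri'. *)
Lemma unimprovable_sosm : sosm R T (modpref P del) q pri' mu.
Proof.
split=> // -[lam [lst [ldom [i [iR Hi]]]]].
have := Hunimp (stable_weaken HPd Hext lst) ldom iR.
by move=> E; move: Hi; rewrite E (negbTE (pref_irr HPd _ _)).
Qed.

(* Each round removes a student, or else (everybody being matched) an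
   underdemanded school. *)
Lemma round_progress : T' != set0 -> #|R'| + #|T'| < #|R| + #|T|.
Proof.
move=> T'ne.
have subR : R' \subset R by apply/subsetP => i; exact: next_students_R.
have subT : T' \subset T by apply/subsetP => s; exact: next_schools_T.
case: (boolP (D == set0)) => HD.
- have matched i : i \in R -> mu i <> None.
    move=> iR E; have : i \in D by rewrite inE iR E.
    by rewrite (eqP HD) inE.
  have Tne : T != set0.
    by case/set0Pn: T'ne => s sT; apply/set0Pn; exists s; exact: next_schools_T sT.
  have [s sT Hs] := sosm_underdemanded HPd (fun s => (pri'_total s).1.1)
    (fun s => (pri'_total s).1.2) unimprovable_sosm Tne matched.
  have sU : s \in round_closed P R T del mu.
    by rewrite inE sT /=; apply/forallP => i; apply/implyP; exact: Hs.
  have : #|T'| < #|T|.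
    by apply: proper_card; apply/properP; split => //; exists s; rewrite // next_schoolsP sU.
  have := subset_leq_card subR; lia.
- have : #|R'| < #|R|.
    apply: proper_card; apply/properP; split => //.
    by case/set0Pn: HD => i iD; exists i; [exact: removed_R iD | rewrite next_studentsP iD].
  have := subset_leq_card subT; lia.
Qed.

(* An improvement on the next problem would glue to one on the current one. *)
Lemma unimprovable_next : unimprovable R' T' (next_del P pri R T del mu).
Proof.
move=> lam lst ldom i iR.
pose lam2 i := if i \in D then mu i else lam i.
have l2D j : j \in D -> lam2 j = mu j by rewrite /lam2 => ->.
have l2R j : j \in R' -> lam j = lam2 j.
  by rewrite /lam2 next_studentsP => /andP [/negbTE ->].
have lst2 := stable_ext (modpref_strict_total HP _) l2R lst.
have ldom2 j : j \in R' -> wpref (modpref P (next_del P pri R T del mu)) j (lam2 j) (mu j).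
  by move=> jR; rewrite -l2R //; exact: ldom.
have [Gst Gge] := glue_stable HP Hpri Hext Hrec Hmu l2D lst2 ldom2.
by rewrite l2R // (Hunimp Gst Gge (next_students_R iR)).
Qed.

End CompletenessRound.

Lemma eadam_outputs n (R : {set I}) (T : {set S}) (del : I -> {set S}) (out : I -> option S) :
  #|R| + #|T| < n -> deletion_record P pri R T del out ->
  stable R T (modpref P del) q pri' mu -> unimprovable R T del ->
  (forall i, i \notin R -> out i = mu i) ->
  eadam_run P q pri pri' R T del out mu.
Proof.
elim: n R T del out => // n IH R T del out Hsize Hrec Hmu Hunimp Hout.
have Hsosm := unimprovable_sosm Hmu Hunimp.
have next_out_mu i : i \notin next_students P R T del mu -> next_out P R T del out mu i = mu i.
  rewrite /next_out next_studentsP negb_and negbK; case: ifP => // _ iR.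
  exact: Hout.
case: (eqVneq (next_schools P R T del mu) set0) => HT.
- apply: (eadam_stop pri Hsosm HT) => i.
  rewrite -[RHS]/(next_out P R T del out mu i) next_out_mu //.
  rewrite next_studentsP; apply/negP => /andP [iD iR].
  by have [s [_]] := staying_seat Hmu iR iD; rewrite HT inE.
- apply: (eadam_continue Hsosm _ (IH _ _ _ _ _ (next_record Hrec) _ _ next_out_mu)).
  + by move=> E; move: HT; rewrite /next_schools E eqxx.
  + by rewrite -ltnS; apply: leq_trans Hsize; exact: round_progress.
  + exact: (restricted_mu_stable HP Hpri Hext Hrec Hmu).
  + exact: (unimprovable_next Hrec Hmu Hunimp).
Qed.

End Completeness.

Theorem corollary5 (I S : finType) (P : I -> rel (option S)) (q : S -> nat)
  (pri : S -> rel I) :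
  3 <= #|I| ->
  (forall i, total_order (P i)) ->
  (forall s, 0 < q s) ->
  (forall s, partial_order (pri s)) ->
  forall mu : I -> option S,
    f_sosm P q pri mu <->
    exists pri' : S -> rel I, extension pri pri' /\ EA P q pri pri' mu.
Proof.
move=> _ P_total _ Hpri mu; have HP i := total_order_strict (P_total i).
have init := deletion_record_init P pri (fun _ => None).
split.
- (* An SOSM is stable and unimprovable for its fair extension, so EADAM
     run with that extension outputs it. *)
  move=> [mu_st mu_opt]; have [_ _ _ mu_fair] := mu_st.
  have [Hext ext_fair] := fair_extensionP HP Hpri mu_fair.
  exists (fair_extension P pri mu); split => //.
  have ext_sub s : subrel (pri s) (fair_extension P pri mu s) := (Hext s).2.
  have ext_total s := (Hext s).1.
  apply: (eadam_outputs HP Hpri ext_sub ext_total (ltnSn _) init).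
  + by rewrite modpref_nodel; have [mu_M mu_IR mu_NW _] := mu_st; split.
  + rewrite /unimprovable modpref_nodel => lam lst ldom i _; apply/eqP/negPn/negP => /eqP ne.
    apply: mu_opt; exists lam; split => //; split => //.
    by exists i; split => //; exact: wpref_neq (ldom _ (in_setT i)) ne.
  + by move=> i; rewrite in_setT.
-
  move=> [pri' [Hext run]].
  have [_ Hst _ Hnd] := eadam_run_sound HP Hpri (fun s => (Hext s).2)
    (fun s => (Hext s).1.2.2) run init.
  by move: Hst Hnd; rewrite modpref_nodel; split.
Qed.
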